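(* Let $Z\subset\mathbb{S}_1$ be a finite nonempty set of points. Then the following are equivalent: (i) $Z=\{Q\}$ for a single point $Q\in E_1$; (ii) $\alpha(Z)=\alpha(2Z)=\alpha(3Z)=\alpha(4Z)=\alpha(5Z)=1$.
   Context: Let $P_1\in\mathbb{P}^2(\mathbb{C})$ be a point and $f\colon\mathbb{S}_1\to\mathbb{P}^2$ the blow-up of $\mathbb{P}^2$ at $P_1$, with exceptional curve $E_1=f^{-1}(P_1)$; let $H$ be the pullback of the class of a line. Let $\mathbb{L}_1=3H-E_1=-K_{\mathbb{S}_1}$. For a finite set $Z\subset\mathbb{S}_1$ with ideal sheaf $\mathcal{I}_Z$ and a positive integer $m$, the initial degree is $\alpha(mZ)=\min\{d\ge 0:\ H^0(\mathbb{S}_1,d\mathbb{L}_1\otimes\mathcal{I}_Z^{(m)})\neq 0\}$, i.e. the least $d$ such that some effective divisor $D\in|d\mathbb{L}_1|$ has multiplicity at least $m$ at every point of $Z$. *)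

From HB Require Import structures.
From mathcomp Require Import all_boot all_order all_algebra.
From mathcomp Require Import complex.
From mathcomp Require Import reals.
From mathcomp Require Import mpoly.
From Stdlib Require List.

Set Implicit Arguments.
Unset Strict Implicit.
Unset Printing Implicit Defensive.

Import Order.TTheory GRing.Theory Num.Theory.
Local Open Scope ring_scope.

(* Points of P^2 are given by nonzero row vectors in C^3 (up to scaling);
   homogeneous polynomials of P^2 are elements of {mpoly C[3]}. *)

Section BlowUp.
Variable C : fieldType.

Definition mx3 (a b c : 'rV[C]_3) : 'M[C]_3 :=
  \matrix_(i < 3, j < 3) (if i == 0 :> nat then a 0 j
                          else if i == 1 :> nat then b 0 j else c 0 j).

Definition basis3 (a b c : 'rV[C]_3) : bool := \det (mx3 a b c) != 0.

(* two vectors are linearly independent (distinct points of P^2) *)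
Definition indep2 (a b : 'rV[C]_3) : bool := \rank (col_mx a b) == 2%N.

Definition homog_deg (F : {mpoly C[3]}) (k : nat) : Prop :=
  forall e : 'X_{1..3}, F@_e != 0 -> mdeg e = k.

Definition affine_sub (F : {mpoly C[3]}) (a u w : 'rV[C]_3) : {mpoly C[2]} :=
  comp_mpoly [tuple (a 0 j)%:MP + (u 0 j)%:MP * 'X_0 + (w 0 j)%:MP * 'X_1 | j < 3] F.

(* The polynomial G(s,t) = F(a + s*v + s*t*w): the standard affine chart of the
   blow-up of P^2 at [a], with exceptional curve {s = 0} and the point (0,0)
   being the point of E corresponding to the tangent direction v at [a]. *)
Definition blowup_sub (F : {mpoly C[3]}) (a v w : 'rV[C]_3) : {mpoly C[2]} :=
  comp_mpoly [tuple (a 0 j)%:MP + (v 0 j)%:MP * 'X_0 + (w 0 j)%:MP * ('X_0 * 'X_1)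
             | j < 3] F.

Definition pmult_ge (F : {mpoly C[3]}) (p : 'rV[C]_3) (m : nat) : Prop :=
  exists u w : 'rV[C]_3, basis3 p u w /\
    forall e : 'X_{1..2}, (affine_sub F p u w)@_e != 0 -> (m <= e 0%R + e 1%R)%N.

(* Points of S_1 = Bl_{[a]} P^2 *)
Inductive spt : Type :=
  | Off of 'rV[C]_3   (* the point f^{-1}([p]) for [p] <> [a] *)
  | OnE of 'rV[C]_3.  (* the point of E_1 given by the tangent direction of the line [a][v] *)

Definition valid_pt (a : 'rV[C]_3) (z : spt) : bool :=
  match z with Off p => indep2 a p | OnE v => indep2 a v end.

Definition same_pt (a : 'rV[C]_3) (z z' : spt) : Prop :=
  match z, z' with
  | Off p, Off q => \rank (col_mx p q) = 1%N
  | OnE v, OnE u => \rank (col_mx a (col_mx v u)) = 2%N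
  | _, _ => False
  end.

(* The effective divisor D = f^*(F = 0) - d E_1 in |d L_1| (where F is homogeneous of
   degree 3d with multiplicity >= d at [a]) has multiplicity at least m at z. *)
Definition dmult_ge (a : 'rV[C]_3) (d : nat) (F : {mpoly C[3]}) (z : spt) (m : nat) : Prop :=
  match z with
  | Off p => pmult_ge F p m
  | OnE v => exists w : 'rV[C]_3, basis3 a v w /\
      forall e : 'X_{1..2}, (blowup_sub F a v w)@_e != 0 ->
        (d <= e 0%R)%N /\ (m <= (e 0%R - d) + e 1%R)%N
  end.

(* Effective divisors in |d L_1| = |d(3H - E_1)| correspond to nonzero F homogeneous
   of degree 3d with multiplicity >= d at P_1 = [a]. *)
Definition is_section (a : 'rV[C]_3) (d : nat) (F : {mpoly C[3]}) : Prop :=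
  F != 0 /\ homog_deg F (3 * d) /\ pmult_ge F a d.

(* H^0(S_1, d L_1 (x) I_Z^(m)) <> 0 *)
Definition has_div (a : 'rV[C]_3) (Z : seq spt) (m d : nat) : Prop :=
  exists F, is_section a d F /\ forall z, List.In z Z -> dmult_ge a d F z m.

Definition alpha_eq (a : 'rV[C]_3) (Z : seq spt) (m k : nat) : Prop :=
  has_div a Z m k /\ forall d, (d < k)%N -> ~ has_div a Z m d.

End BlowUp.

(* Let P_1 = [a] and describe a point Q of E_1 by a direction u, completed to a
   frame (a, u, w).  The cube of the line through [a] in direction u pulls back to
   3 L + 2 E_1, with L the strict transform, which has multiplicity 5 at Q; and the
   only member of |0 L_1| is the empty divisor.  Conversely, let a cubic F through
   [a] define a member of |L_1| of multiplicity >= 5 at every point of Z.  A cubic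
   has no point of multiplicity > 3, so Z lies on E_1.  At Q, in the chart
   (1, s, st) of the blow-up, F acquires order >= 5 + 1, which forces F = h X_2^3
   in the frame (a, u, w): F is the cube of the line through [a] in direction u.
   As F determines that line, Z is a single point. *)

From HB Require Import structures.
From mathcomp Require Import all_boot all_order all_algebra.
From mathcomp Require Import complex reals mpoly.
From mathcomp Require Import zify.
From Stdlib Require List.
Set Implicit Arguments.
Unset Strict Implicit.
Unset Printing Implicit Defensive.
Import Order.TTheory GRing.Theory Num.Theory.
Local Open Scope ring_scope.

Section Substitution.
Variable R : comNzRingType.

Lemma comp_mpolyA n k l (p : {mpoly R[n]}) (s : n.-tuple {mpoly R[k]})
    (t : k.-tuple {mpoly R[l]}) :
  p \mPo s \mPo t = p \mPo [tuple tnth s i \mPo t | i < n].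
Proof.
rewrite [p \mPo s]comp_mpolyEX [RHS]comp_mpolyEX raddf_sum; apply: eq_bigr => m _ /=.
rewrite comp_mpolyZ !comp_mpolyX rmorph_prod /=; congr (_ *: _).
by apply: eq_bigr => i _; rewrite rmorphXn tnth_mktuple.
Qed.

Lemma mcoeff_comp_mpoly_monomial n k (p : {mpoly R[n]}) (t : n.-tuple {mpoly R[k]})
    (f : 'X_{1..n} -> 'X_{1..k}) m :
  (forall m', 'X_[m'] \mPo t = 'X_[f m']) -> {in msupp p &, injective f} ->
  m \in msupp p -> (p \mPo t)@_(f m) = p@_m.
Proof.
move=> tX f_inj mp; rewrite comp_mpolyEX raddf_sum /=.
rewrite (bigD1_seq m) ?msupp_uniq //= tX mcoeffZ mcoeffX eqxx mulr1.
rewrite big_seq_cond big1 ?addr0 // => m' /andP[m'p m'm].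
rewrite tX mcoeffZ mcoeffX; case: eqP => [/f_inj fm | _]; last by rewrite mulr0.
by rewrite fm ?eqxx in m'm.
Qed.

Lemma comp_mpoly_dhomog n k (p : {mpoly R[n]}) (t : n.-tuple {mpoly R[k]}) d :
  (forall i, tnth t i \is 1.-homog) -> p \is d.-homog -> p \mPo t \is d.-homog.
Proof.
move=> t1 /dhomogP pd; rewrite comp_mpolyEX big_seq rpred_sum // => m mp.
have -> : d = (\sum_i m i)%N by rewrite -(pd m mp) /= mdegE.
rewrite rpredZ // comp_mpolyX.
apply: (big_rec2 (fun e q => q \is e.-homog)) => [|i e q _ qe]; first exact: dhomog1.
by apply: dhomogM qe; rewrite -[X in X.-homog]mul1n; apply: dhomogMn.
Qed.

End Substitution.

Lemma dhomog0_mpolyC (R : nzRingType) n (p : {mpoly R[n]}) :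
  p \is 0.-homog -> p = (p@_0%MM)%:MP.
Proof.
move=> /dhomogP p0; apply/mpolyP => m; rewrite mcoeffC.
have [-> | m0] := eqVneq 0%MM m; first by rewrite mulr1.
rewrite mulr0; apply/eqP; apply: contraT => pm.
have mp : m \in msupp p by rewrite mcoeff_msupp.
by move/eqP: (p0 m mp); rewrite /= mdeg_eq0 eq_sym (negPf m0).
Qed.

Section LinearSubstitution.
Variables (R : comUnitRingType) (n : nat).
Implicit Types (M N : 'M[R]_n) (c : 'cV[R]_n) (p : {mpoly R[n]}).

Definition lform c : {mpoly R[n]} := \sum_(i < n) c i 0 *: 'X_i.

Definition mxsubst M : n.-tuple {mpoly R[n]} := [tuple lform (col j M) | j < n].

Lemma lform_dhomog c : lform c \is 1.-homog.
Proof. by rewrite rpred_sum // => i _; rewrite rpredZ // dhomogX /= mdeg1. Qed.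

Lemma mcoeff_lform c i : (lform c)@_U_(i) = c i 0.
Proof.
rewrite raddf_sum (bigD1 i) //= mcoeffZ mcoeffXU eqxx mulr1 big1 ?addr0 //.
by move=> j ji; rewrite mcoeffZ mcoeffXU (negPf ji) mulr0.
Qed.

Lemma lform_eq0 c : (lform c == 0) = (c == 0).
Proof.
apply/eqP/eqP => [c0 | ->]; last by rewrite /lform big1 // => i _; rewrite mxE scale0r.
by apply/matrixP => i j; rewrite (ord1 j) -mcoeff_lform c0 mcoeff0 mxE.
Qed.

Lemma comp_lform k c (t : n.-tuple {mpoly R[k]}) :
  lform c \mPo t = \sum_(i < n) c i 0 *: tnth t i.
Proof.
rewrite raddf_sum; apply: eq_bigr => i _ /=.
by rewrite comp_mpolyZ comp_mpolyXU -tnth_nth.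
Qed.

Lemma comp_lform_mxsubst c M : lform c \mPo mxsubst M = lform (M *m c).
Proof.
rewrite comp_lform /lform.
under eq_bigr => j _ do rewrite tnth_mktuple scaler_sumr.
rewrite exchange_big; apply: eq_bigr => i _ /=.
by rewrite mxE scaler_suml; apply: eq_bigr => j _; rewrite scalerA !mxE mulrC.
Qed.

Lemma comp_mxsubstM p M N : p \mPo mxsubst M \mPo mxsubst N = p \mPo mxsubst (N *m M).
Proof.
rewrite comp_mpolyA; congr comp_mpoly; apply: eq_from_tnth => j.
by rewrite !tnth_mktuple comp_lform_mxsubst !colE mulmxA.
Qed.

Lemma comp_mxsubst1 p : p \mPo mxsubst 1%:M = p.
Proof.
rewrite -[RHS]comp_mpoly_id; congr comp_mpoly; apply: eq_from_tnth => j.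
rewrite !tnth_mktuple /lform (bigD1 j) //= !mxE eqxx scale1r big1 ?addr0 //.
by move=> i ij; rewrite !mxE (negPf ij) scale0r.
Qed.

Lemma comp_mxsubstK p M : M \in unitmx -> p \mPo mxsubst M \mPo mxsubst (invmx M) = p.
Proof. by move=> Mu; rewrite comp_mxsubstM mulVmx // comp_mxsubst1. Qed.

Lemma mxsubst_dhomog p M d : p \is d.-homog -> p \mPo mxsubst M \is d.-homog.
Proof. by apply: comp_mpoly_dhomog => j; rewrite tnth_mktuple lform_dhomog. Qed.

Lemma meval_mxsubst p M (x : 'rV[R]_n) :
  (p \mPo mxsubst M).@[fun i => x 0 i] = p.@[fun j => (x *m M) 0 j].
Proof.
rewrite comp_mpoly_meval; apply: meval_eq => j.
rewrite tnth_mktuple /lform raddf_sum mxE; apply: eq_bigr => i _ /=.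
by rewrite mevalZ mevalXU !mxE mulrC.
Qed.

End LinearSubstitution.

Lemma big_ord2 (T : Type) (idx : T) (op : Monoid.law idx) (F : 'I_2 -> T) :
  \big[op/idx]_(i < 2) F i = op (F 0) (F 1).
Proof.
rewrite !big_ord_recl big_ord0 Monoid.mulm1.
by congr (op (F _) (F _)); apply: val_inj.
Qed.

Lemma big_ord3 (T : Type) (idx : T) (op : Monoid.law idx) (F : 'I_3 -> T) :
  \big[op/idx]_(i < 3) F i = op (F 0) (op (F 1) (F 2)).
Proof.
rewrite !big_ord_recl big_ord0 Monoid.mulm1.
by congr (op (F _) (op (F _) (F _))); apply: val_inj.
Qed.

Lemma mdeg2 (e : 'X_{1..2}) : mdeg e = (e 0%R + e 1%R)%N.
Proof. by rewrite mdegE big_ord2. Qed.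

Lemma mdeg3 (m : 'X_{1..3}) : mdeg m = (m 0%R + (m 1%R + m 2%R))%N.
Proof. by rewrite mdegE big_ord3. Qed.

Lemma mnm3_eq (m m' : 'X_{1..3}) :
  mdeg m = mdeg m' -> m 1%R = m' 1%R -> m 2%R = m' 2%R -> m = m'.
Proof.
rewrite !mdeg3 => dmm' m1 m2; have m0 : m 0%R = m' 0%R by lia.
apply/mnmP => -[[|[|[|//]]] i3].
- by rewrite (_ : Ordinal i3 = 0%R) //; apply: val_inj.
- by rewrite (_ : Ordinal i3 = 1%R) //; apply: val_inj.
- by rewrite (_ : Ordinal i3 = 2%R) //; apply: val_inj.
Qed.

Section LinearAlgebra.
Variable C : fieldType.
Implicit Types a u v w x : 'rV[C]_3.

Lemma nz_kernel_col m n (A : 'M[C]_(m, n)) : (\rank A < n)%N ->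
  exists2 c : 'cV_n, c != 0 & A *m c = 0.
Proof.
set K := kermx A^T => rA; have K0 : K != 0.
  by rewrite -mxrank_eq0 mxrank_ker mxrank_tr subn_eq0 -ltnNge.
exists (nz_row K)^T; first by rewrite trmx_eq0 nz_row_eq0.
apply: trmx_inj; rewrite trmx_mul trmxK trmx0; apply/sub_kermxP; exact: nz_row_sub.
Qed.

Lemma mx3_col a u w : mx3 a u w = col_mx a (col_mx u w).
Proof.
apply/matrixP => i j; rewrite !mxE; case: splitP => k /= ->; first by rewrite (ord1 k).
by rewrite mxE; case: splitP => l /= ->; rewrite (ord1 l).
Qed.

Lemma mx3_eqmx a u w : (mx3 a u w :=: a + (u + w))%MS.
Proof.
rewrite mx3_col; apply: eqmx_sym.
exact: eqmx_trans (adds_eqmx (eqmx_refl a) (addsmxE u w)) (addsmxE _ _).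
Qed.

Lemma indep2E a v : indep2 a v = (\rank (a + v)%MS == 2%N).
Proof. by rewrite /indep2 addsmxE. Qed.

Lemma basis3E a u w : basis3 a u w = (\rank (a + (u + w))%MS == 3%N).
Proof. by rewrite /basis3 -unitfE -unitmxE -row_full_unit /row_full mx3_eqmx. Qed.

Lemma rank_span_eq2 a u v : indep2 a v ->
  \rank (a + (u + v))%MS = 2%N <-> (u <= a + v)%MS.
Proof.
rewrite indep2E => /eqP rav.
have av_sub : (a + v <= u + (a + v))%MS by rewrite addsmxSr.
rewrite addsmxA (addsmxC a u) -addsmxA.
have [_] := mxrank_leqif_sup av_sub; rewrite rav addsmx_sub submx_refl andbT => <-.
by rewrite eq_sym; split=> /eqP.
Qed.

Lemma same_pt_OnE a u v : indep2 a v ->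
  same_pt a (OnE u) (OnE v) <-> (u <= a + v)%MS.
Proof. by move=> av; rewrite /= -mx3_col mx3_eqmx; apply: rank_span_eq2. Qed.

Lemma row_mul_mx3 x a u w : x *m mx3 a u w = x 0 0 *: a + x 0 1 *: u + x 0 2 *: w.
Proof. by apply/rowP => j; rewrite !mxE big_ord3 /= addrA !mxE. Qed.

Lemma basis3_ext a u : indep2 a u -> exists w, basis3 a u w.
Proof.
rewrite indep2E => /eqP rau; set w := nz_row (a + u)^C%MS; exists w.
have w_nz : w != 0.
  by rewrite nz_row_eq0 -mxrank_eq0 mxrank_compl rau.
have cap0 : ((a + u) :&: w)%MS = 0.
  apply/eqP; rewrite -submx0 -(capmx_compl (a + u)%MS).
  by apply: capmxS => //; apply: nz_row_sub.
by rewrite basis3E addsmxA mxrank_disjoint_sum // rau rank_rV w_nz.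
Qed.

End LinearAlgebra.

Section Charts.
Variable C : fieldType.
Implicit Types (F G : {mpoly C[3]}) (m : 'X_{1..3}) (a p u v w : 'rV[C]_3).

Definition affine_chart : 3.-tuple {mpoly C[2]} := [tuple 1; 'X_0; 'X_1].
Definition blowup_chart : 3.-tuple {mpoly C[2]} := [tuple 1; 'X_0; 'X_0 * 'X_1].

Lemma tnth_mxsubst_mx3 a u w j :
  tnth (mxsubst (mx3 a u w)) j = a 0 j *: 'X_0 + u 0 j *: 'X_1 + w 0 j *: 'X_2.
Proof. by rewrite tnth_mktuple /lform big_ord3 /= addrA !mxE. Qed.

Lemma affine_subE F p u w :
  affine_sub F p u w = F \mPo mxsubst (mx3 p u w) \mPo affine_chart.
Proof.
rewrite comp_mpolyA; congr comp_mpoly; apply: eq_from_tnth => j.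
rewrite [RHS]tnth_mktuple tnth_mxsubst_mx3 tnth_mktuple !raddfD /=.
by rewrite !comp_mpolyZ !comp_mpolyXU /= alg_mpolyC !mul_mpolyC.
Qed.

Lemma blowup_subE F a v w :
  blowup_sub F a v w = F \mPo mxsubst (mx3 a v w) \mPo blowup_chart.
Proof.
rewrite comp_mpolyA; congr comp_mpoly; apply: eq_from_tnth => j.
rewrite [RHS]tnth_mktuple tnth_mxsubst_mx3 tnth_mktuple !raddfD /=.
by rewrite !comp_mpolyZ !comp_mpolyXU /= alg_mpolyC !mul_mpolyC.
Qed.

Definition affine_mnm m : 'X_{1..2} := [multinom [tuple m 1%R; m 2%R]].
Definition blowup_mnm m : 'X_{1..2} := [multinom [tuple m 1%R + m 2%R; m 2%R]%N].

Lemma affine_chartX m : 'X_[m] \mPo affine_chart = 'X_[affine_mnm m].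
Proof.
rewrite comp_mpolyX big_ord3 [RHS]mpolyXE_id !big_ord_recl big_ord0 /=.
by rewrite expr1n mul1r mulr1.
Qed.

Lemma blowup_chartX m : 'X_[m] \mPo blowup_chart = 'X_[blowup_mnm m].
Proof.
rewrite comp_mpolyX big_ord3 [RHS]mpolyXE_id !big_ord_recl big_ord0 /=.
by rewrite expr1n mul1r mulr1 exprMn exprD mulrA.
Qed.



Lemma affine_mnm0 m : affine_mnm m 0%R = m 1%R. Proof. by []. Qed.
Lemma affine_mnm1 m : affine_mnm m 1%R = m 2%R. Proof. by []. Qed.
Lemma blowup_mnm0 m : blowup_mnm m 0%R = (m 1%R + m 2%R)%N. Proof. by []. Qed.
Lemma blowup_mnm1 m : blowup_mnm m 1%R = m 2%R. Proof. by []. Qed.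

Lemma mdeg_affine_mnm m : mdeg (affine_mnm m) = (m 1%R + m 2%R)%N.
Proof. by rewrite mdeg2. Qed.

Lemma mdeg_blowup_mnm m : mdeg (blowup_mnm m) = (m 1%R + m 2%R + m 2%R)%N.
Proof. by rewrite mdeg2. Qed.

Lemma mcoeff_affine_chart G d m : G \is d.-homog -> m \in msupp G ->
  (G \mPo affine_chart)@_(affine_mnm m) = G@_m.
Proof.
move=> /dhomogP Gd; apply: mcoeff_comp_mpoly_monomial; first exact: affine_chartX.
move=> x y xG yG /mnmP xy; apply: mnm3_eq; first by rewrite /= !Gd.
  by have := xy 0%R; rewrite !affine_mnm0.
by have := xy 1%R; rewrite !affine_mnm1.
Qed.

Lemma mcoeff_blowup_chart G d m : G \is d.-homog -> m \in msupp G ->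
  (G \mPo blowup_chart)@_(blowup_mnm m) = G@_m.
Proof.
move=> /dhomogP Gd; apply: mcoeff_comp_mpoly_monomial; first exact: blowup_chartX.
move=> x y xG yG /mnmP xy; have := xy 0%R; have := xy 1%R.
rewrite !blowup_mnm0 !blowup_mnm1 => x2; rewrite x2 => /addIn x1.
by apply: mnm3_eq; rewrite // /= !Gd.
Qed.

Lemma unit_mx3 a u w : basis3 a u w -> mx3 a u w \in unitmx.
Proof. by rewrite unitmxE unitfE. Qed.

Lemma homog_degP F d : homog_deg F d <-> F \is d.-homog.
Proof.
split=> [Fd | /dhomogP Fd e]; first by apply/dhomogP => m; rewrite mcoeff_msupp => /Fd.
by rewrite -mcoeff_msupp => /Fd.
Qed.

Lemma pmult_gt_deg_eq0 F p d k : homog_deg F d -> (d < k)%N -> pmult_ge F p k -> F = 0.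
Proof.
move=> /homog_degP Fd dk [u [w [puw mult]]].
set G := F \mPo mxsubst (mx3 p u w).
have Gd : G \is d.-homog := mxsubst_dhomog _ Fd.
suff G0 : G = 0 by rewrite -(comp_mxsubstK F (unit_mx3 puw)) -/G G0 comp_mpoly0.
apply/mpolyP => m; rewrite mcoeff0; apply/eqP; apply: contraT => Gm.
have mG : m \in msupp G by rewrite mcoeff_msupp.
have := mult (affine_mnm m); rewrite affine_subE -/G (mcoeff_affine_chart Gd mG).
move=> /(_ Gm); rewrite -mdeg2 mdeg_affine_mnm.
by have := dhomogP _ _ _ Gd m mG; rewrite /= mdeg3; lia.
Qed.

(* The chart sends X_0^i X_1^j X_2^k to s^(j+k) t^k, of degree j + 2k <= 2d,
   with equality only for X_2^d. *)
Lemma dhomog_blowup_mult_Xn G d : G \is d.-homog ->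
  (forall e, (G \mPo blowup_chart)@_e != 0 -> (d.*2 <= mdeg e)%N) ->
  G = G@_(U_(2%R) *+ d) *: 'X_2 ^+ d.
Proof.
move=> Gd mult; apply/mpolyP => m; rewrite mcoeffZ mpolyXn mcoeffX.
have [<- | m_ne] := eqVneq (U_(2%R) *+ d)%MM m; first by rewrite mulr1.
rewrite mulr0; apply/eqP; apply: contraT => Gm.
have mG : m \in msupp G by rewrite mcoeff_msupp.
have := mult (blowup_mnm m); rewrite (mcoeff_blowup_chart Gd mG) => /(_ Gm).
rewrite mdeg_blowup_mnm; have := dhomogP _ _ _ Gd m mG; rewrite /= mdeg3 => md.
move=> m2; case/eqP: m_ne; apply: mnm3_eq; rewrite ?mdegMn ?mdeg1 ?mulmnE ?mnm1E /=.
all: rewrite ?mdeg3; lia.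
Qed.

Lemma comp_lform_mx3 (c : 'cV[C]_3) a u w : a *m c = 0 -> u *m c = 0 ->
  lform c \mPo mxsubst (mx3 a u w) = (w *m c) 0 0 *: 'X_2.
Proof.
move=> ac uc; have entry i (r : 'rV_3) :
    (forall j, mx3 a u w i j = r 0 j) -> (mx3 a u w *m c) i 0 = (r *m c) 0 0.
  by move=> Mr; rewrite !mxE; apply: eq_bigr => j _; rewrite Mr.
rewrite comp_lform_mxsubst /lform big_ord3 /= (entry 0 a) ?(entry 1 u) ?(entry 2 w);
  try by move=> j; rewrite mxE.
by rewrite ac uc !mxE !scale0r !add0r.
Qed.

Lemma mcoeff_chart_Xn (t : 3.-tuple {mpoly C[2]}) f h k e :
    (forall m, 'X_[m] \mPo t = 'X_[f m]) ->
  ((h *: 'X_2 ^+ k) \mPo t)@_e != 0 -> e = f (U_(2%R) *+ k)%MM.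
Proof.
move=> tX; rewrite comp_mpolyZ mpolyXn tX mcoeffZ mcoeffX.
by case: (f _ =P e) => [<- | _]; rewrite ?mulr0 ?eqxx.
Qed.

Lemma comp_line_power (c : 'cV[C]_3) a u w k : a *m c = 0 -> u *m c = 0 ->
  lform c ^+ k \mPo mxsubst (mx3 a u w) = (w *m c) 0 0 ^+ k *: 'X_2 ^+ k.
Proof. by move=> ac uc; rewrite rmorphXn /= comp_lform_mx3 // exprZn. Qed.

Lemma meval_mxsubst_Xn F M h k (x : 'rV[C]_3) : F \mPo mxsubst M = h *: 'X_2 ^+ k ->
  F.@[fun j => (x *m M) 0 j] = h * x 0 2 ^+ k.
Proof. by move=> FM; rewrite -meval_mxsubst FM mevalZ rmorphXn /= mevalXU. Qed.

End Charts.

Section Divisors.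
Variable C : fieldType.
Implicit Types (F : {mpoly C[3]}) (a u v w : 'rV[C]_3) (Z : seq (spt C)).

Lemma no_div_deg0 a Z m : (0 < m)%N -> Z <> [::] -> ~ has_div a Z m 0.
Proof.
move=> m_gt0 Z0 [F [[F0 [F_0 _]] FZ]].
have FC : F = (F@_0%MM)%:MP by apply: dhomog0_mpolyC; apply/homog_degP.
have c0 : F@_0%MM != 0 by apply: contraNneq F0 => F00; rewrite FC F00.
case: Z Z0 FZ => // z Z' _ /(_ z (or_introl erefl)).
case: z => [p [u [w [_ mult]]] | u [w [_ mult]]].
  have := mult 0%MM; rewrite /affine_sub FC comp_mpolyC mcoeffC eqxx mulr1.
  by move=> /(_ c0); rewrite !mnm0E; lia.
have := mult 0%MM; rewrite /blowup_sub FC comp_mpolyC mcoeffC eqxx mulr1.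
by move=> /(_ c0); rewrite !mnm0E; lia.
Qed.

Lemma line_cube_section a v (c : 'cV[C]_3) : indep2 a v -> c != 0 ->
  a *m c = 0 -> v *m c = 0 -> is_section a 1 (lform c ^+ 3).
Proof.
move=> av c0 ac vc; split; first by rewrite expf_neq0 ?lform_eq0.
split; first by apply/homog_degP; apply: dhomogMn (lform_dhomog c).
have [w avw] := basis3_ext av; exists v, w; split=> // e.
rewrite affine_subE comp_line_power // => /(mcoeff_chart_Xn (@affine_chartX C)) ->.
by rewrite affine_mnm0 affine_mnm1 !mulmnE !mnm1E.
Qed.

Lemma line_cube_dmult a u (c : 'cV[C]_3) m : indep2 a u ->
  a *m c = 0 -> u *m c = 0 -> (m <= 5)%N -> dmult_ge a 1 (lform c ^+ 3) (OnE u) m.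
Proof.
move=> au ac uc m5; have [w auw] := basis3_ext au; exists w; split=> // e.
rewrite blowup_subE comp_line_power // => /(mcoeff_chart_Xn (@blowup_chartX C)) ->.
by rewrite blowup_mnm0 blowup_mnm1 !mulmnE !mnm1E /=; lia.
Qed.

Lemma has_div_line_cube a v Z m : indep2 a v ->
  (forall z, List.In z Z -> valid_pt a z) ->
  (forall z, List.In z Z -> same_pt a z (OnE v)) -> (m <= 5)%N -> has_div a Z m 1.
Proof.
move=> av val Zv m5.
have [c c0 avc] : exists2 c : 'cV_3, c != 0 & col_mx a v *m c = 0.
  by apply: nz_kernel_col; move/eqP: av => ->.
move: avc; rewrite mul_col_mx => /eqP; rewrite col_mx_eq0 => /andP[/eqP ac /eqP vc].
exists (lform c ^+ 3); split; first exact: line_cube_section av c0 ac vc.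
move=> z zZ; move: (val z zZ) (Zv z zZ); case: z {zZ} => // u au.
move=> /(same_pt_OnE _ av); rewrite addsmxE => /submxP[D uD].
apply: line_cube_dmult => //.
by rewrite uD -mulmxA mul_col_mx ac vc col_mx0 mulmx0.
Qed.

Lemma dmult_5d_Xn a d F u : homog_deg F (3 * d) -> dmult_ge a d F (OnE u) (5 * d) ->
  exists2 w, basis3 a u w & F \mPo mxsubst (mx3 a u w) =
    (F \mPo mxsubst (mx3 a u w))@_(U_(2%R) *+ (3 * d)) *: 'X_2 ^+ (3 * d).
Proof.
move=> /homog_degP Fd [w [auw mult]]; exists w => //.
apply: dhomog_blowup_mult_Xn; first exact: mxsubst_dhomog.
by move=> e; rewrite -blowup_subE mdeg2 => /mult; lia.
Qed.

Lemma dmult5_cube_frame a F z : F != 0 -> homog_deg F 3 -> dmult_ge a 1 F z 5 ->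
  exists u w (h : C),
    [/\ z = OnE u, basis3 a u w, h != 0 & F \mPo mxsubst (mx3 a u w) = h *: 'X_2 ^+ 3].
Proof.
move=> F0 F3; case: z => [p | u] mult.
  by case/eqP: F0; apply: pmult_gt_deg_eq0 F3 _ mult.
have [w auw FM] := dmult_5d_Xn (d := 1) F3 mult.
set h := _@_ _ in FM; exists u, w, h; split => //.
apply: contraNneq F0 => h0.
by rewrite -(comp_mxsubstK F (unit_mx3 auw)) FM h0 scale0r comp_mpoly0.
Qed.

Lemma has_div5_collinear a Z : Z <> [::] ->
  (forall z, List.In z Z -> valid_pt a z) -> has_div a Z 5 1 ->
  exists v, valid_pt a (OnE v) /\ forall z, List.In z Z -> same_pt a z (OnE v).
Proof.
case: Z => // z0 Z _ val [F [[F0 [F3 _]] FZ]].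
have frame z (zZ : List.In z (z0 :: Z)) := dmult5_cube_frame F0 F3 (FZ z zZ).
have au0 := val z0 (or_introl erefl).
have [u0 [w0 [h0 [z0E au0w0 h0_nz F0M]]]] := frame z0 (or_introl erefl).
rewrite {}z0E in au0; exists u0; split=> // z zZ.
have [u [w [h [-> auw _ FM]]]] := frame z zZ.
apply/(same_pt_OnE _ au0).
(* F vanishes at u, as seen in the frame of u; in the frame of u0 it vanishes
   only where the w0-coordinate does. *)
have Fu : F.@[fun j => u 0 j] = 0.
  have := meval_mxsubst_Xn (delta_mx 0 1) FM.
  by rewrite row_mul_mx3 !mxE /= !scale0r scale1r add0r addr0 expr0n mulr0.
set x := u *m invmx (mx3 a u0 w0).
have x2 : x 0 2 = 0.
  have := meval_mxsubst_Xn x F0M; rewrite mulmxKV ?unit_mx3 // Fu.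
  by move=> /esym/eqP; rewrite mulf_eq0 (negPf h0_nz) expf_eq0 /= => /eqP.
have -> : u = x 0 0 *: a + x 0 1 *: u0.
  by rewrite -[u](mulmxKV (unit_mx3 au0w0)) -/x row_mul_mx3 x2 scale0r addr0.
by rewrite addmx_sub_adds ?scalemx_sub.
Qed.

End Divisors.

Theorem theorem1 (R : realType) (a : 'rV[R[i]]_3) (Z : seq (spt R[i])) :
  a != 0 ->
  (forall z, List.In z Z -> valid_pt a z) ->
  Z <> [::] ->
  ((exists v : 'rV[R[i]]_3, valid_pt a (OnE v) /\
      forall z, List.In z Z -> same_pt a z (OnE v))
   <->
   (forall m : nat, (1 <= m <= 5)%N -> alpha_eq a Z m 1)).
Proof.
(* a != 0 already follows from the independence conditions on the points of Z. *)
move=> _ val Z0; split=> [[v [av Zv]] m /andP[m_gt0 m5] | alpha].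
  split; first exact: has_div_line_cube av val Zv m5.
  by move=> d; rewrite ltnS leqn0 => /eqP ->; apply: no_div_deg0.
by apply: has_div5_collinear => //; case: (alpha 5%N isT).
Qed.
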